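(* Let $\underline{\mathbb{G}}=(\mathbb{G},\mathcal{V},\omega_{\mathcal{V}},\mathcal{F},\omega_{\mathcal{F}})$ be a packaged ribbon graph and let $e$ be an edge of $\mathbb{G}$. Then \[(\underline{\mathbb{G}}\backslash e)^* = \underline{\mathbb{G}}^*/e \qquad\text{and}\qquad (\underline{\mathbb{G}}/ e)^* = \underline{\mathbb{G}}^*\backslash e.\]
   Context: All ribbon graphs are orientable. A ribbon graph $\mathbb{G}=(V,E)$ is an orientable surface with boundary formed as a union of discs $V$ (vertices) and discs $E$ (edges) such that vertices and edges meet in disjoint arcs, each arc lies on the boundary of exactly one vertex and one edge, and each edge contains exactly two such arcs. $\mathbb{G}\backslash e$ is obtained by removing the edge $e$; $\mathbb{G}/e$ (contraction) is obtained by taking the boundary curve(s) of $e\cup u\cup v$ (where $u,v$ are the ends of $e$, possibly equal), attaching a disc to each such curve to form new vertices, and removing $e,u,v$. The dual $\mathbb{G}^*$ is obtained by capping each boundary component of $\mathbb{G}$ with a disc; these discs are the vertices of $\mathbb{G}^*$ and the edges are the same as those of $\mathbb{G}$. Thus vertices of $\mathbb{G}$ correspond to boundary components of $\mathbb{G}^*$ and boundary components of $\mathbb{G}$ to vertices of $\mathbb{G}^*$. A packaged ribbon graph is a tuple $\underline{\mathbb{G}}=(\mathbb{G},\mathcal{V},\omega_{\mathcal{V}},\mathcal{F},\omega_{\mathcal{F}})$ where $\mathbb{G}=(V,E)$ is a ribbon graph with set of boundary components $F$, $\mathcal{V}$ is a partition of $V$, $\mathcal{F}$ is a partition of $F$,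 and $\omega_{\mathcal{V}}:\mathcal{V}\to\mathbb{N}_0$, $\omega_{\mathcal{F}}:\mathcal{F}\to\mathbb{N}_0$ are weightings. $[v]$ and $[f]$ denote the blocks containing $v$ and $f$. Deletion $\underline{\mathbb{G}}\backslash e$: the ribbon graph is $\mathbb{G}\backslash e$, and $\mathcal{V},\omega_{\mathcal{V}}$ are unchanged; boundary components not meeting $e$ persist with their blocks and weights. (i) If $e$ meets a single boundary component $f$ (twice), deleting $e$ creates two boundary components $f',g'$ in place of $f$; the block $[f]$ is replaced by $([f]\setminus\{f\})\cup\{f',g'\}$ with weight $\omega_{\mathcal{F}}([f])+1$. (ii) If $e$ meets two boundary components $f\neq g$ with $[f]=[g]$, deletion creates one boundary component $f'$; the block is replaced by $([f]\setminus\{f,g\})\cup\{f'\}$ with weight $\omega_{\mathcal{F}}([f])+1$. (iii) If $e$ meets $f\ne g$ with $[f]\neq[g]$, deletion creates one boundary component $f'$; the blocks $[f],[g]$ are replaced by the single block $([f]\cup[g]\setminus\{f,g\})\cup\{f'\}$ with weight $\omega_{\mathcal{F}}([f])+\omega_{\mathcal{F}}([g])$. All other blocks and weights are unchanged. Contraction $\underline{\mathbb{G}}/e$: the ribbon graph is $\mathbb{G}/e$; boundary components of $\mathbb{G}$ and $\mathbb{G}/e$ correspond naturally, and $\mathcal{F},\omega_{\mathcal{F}}$ are transported along this correspondence. (i) If $e$ is a loop at $u$, contraction replaces $u$ by two vertices $u',v'$; the block $[u]$ is replaced by $([u]\setminus\{u\})\cup\{u',v'\}$ with weight $\omega_{\mathcal{V}}([u])+1$.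 (ii) If $e$ is a non-loop with ends $u\ne v$ and $[u]=[v]$, contraction gives one vertex $u'$; the block is replaced by $([u]\setminus\{u,v\})\cup\{u'\}$ with weight $\omega_{\mathcal{V}}([u])+1$. (iii) If $e$ has ends $u\neq v$ with $[u]\ne[v]$, the blocks $[u],[v]$ are replaced by $([u]\cup[v]\setminus\{u,v\})\cup\{u'\}$ with weight $\omega_{\mathcal{V}}([u])+\omega_{\mathcal{V}}([v])$. All other blocks and weights are unchanged. Dual: $\underline{\mathbb{G}}^*=(\mathbb{G}^*,\mathcal{V}^*,\omega_{\mathcal{V}^*},\mathcal{F}^*,\omega_{\mathcal{F}^*})$, where $\mathcal{V}^*$ (a partition of the vertices of $\mathbb{G}^*$) and its weighting are induced from $\mathcal{F},\omega_{\mathcal{F}}$ via the correspondence between boundary components of $\mathbb{G}$ and vertices of $\mathbb{G}^*$, and $\mathcal{F}^*,\omega_{\mathcal{F}^*}$ are induced from $\mathcal{V},\omega_{\mathcal{V}}$ via the correspondence between vertices of $\mathbb{G}$ and boundary components of $\mathbb{G}^*$. Edges of $\mathbb{G}^*$ are identified with those of $\mathbb{G}$. *)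

From mathcomp Require Import all_boot all_order.
Set Implicit Arguments. Unset Strict Implicit. Unset Printing Implicit Defensive.

(* A packaged ribbon graph whose darts live in a fixed finite type T.
   - [dom] : the set of darts ("corners") currently in use;
   - [al]  : edge involution.  A dart x with [al x != x] is a half-edge, the
             edge being {x, al x}.  A dart with [al x = x] is a *marker*
             standing for an isolated vertex (it is also [sg]-fixed);
   - [sg]  : rotation system; vertices = [sg]-orbits of [dom];
   - boundary components = orbits of the face permutation [ph x = sg (al x)];
   - the partition calV of vertices is encoded as an equivalence relation
     [vrel] on darts saturated by [sg]-orbits, its weighting by [wV]
     (constant on classes); likewise calF by [frel] / [wF] w.r.t. [ph]. *)
Record pgraph (T : finType) := PGraph {
  dom : {set T};
  sg : T -> T;
  al : T -> T;
  vrel : rel T;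
  wV : T -> nat;
  frel : rel T;
  wF : T -> nat }.

Section Ops.
Variable T : finType.
Implicit Types (G : pgraph T) (h : T).

Definition ph G (x : T) : T := sg G (al G x).

Definition wpart (D : {set T}) (r : rel T) (f : T -> T) (w : T -> nat) : Prop :=
  [/\ (forall x, x \in D -> r x x),
      (forall x y, x \in D -> y \in D -> r x y -> r y x),
      (forall x y z, x \in D -> y \in D -> z \in D -> r x y -> r y z -> r x z),
      (forall x y, x \in D -> y \in D -> fconnect f x y -> r x y) &
      (forall x y, x \in D -> y \in D -> r x y -> w x = w y)].

Definition wf_pgraph G : Prop :=
  [/\ (forall x, x \in dom G -> sg G x \in dom G),
      {in dom G &, injective (sg G)},
      (forall x, x \in dom G -> al G x \in dom G /\ al G (al G x) = x) &
      (forall x, x \in dom G -> al G x = x -> sg G x = x)] /\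
  wpart (dom G) (vrel G) (sg G) (wV G) /\
  wpart (dom G) (frel G) (ph G) (wF G).

Definition dual G : pgraph T :=
  PGraph (dom G) (ph G) (al G) (frel G) (wF G) (vrel G) (wV G).

Definition onE G h (x : T) : bool := (x == h) || (x == al G h).

(* block update: either e meets one object (x) or two objects in the same
   block (weight + 1), or two objects in different blocks (merge, add weights) *)
Definition upd_rel (sameblk : bool) (r : rel T) (a b : T) : rel T :=
  fun x y => if sameblk then r x y
             else [|| r x y, r x a && r y b | r x b && r y a].
Definition upd_w (sameblk : bool) (r : rel T) (w : T -> nat) (a b : T) : T -> nat :=
  fun x => if sameblk then (if r x a then (w a).+1 else w x)
           else (if r x a || r x b then w a + w b else w x).

Definition del_sg G h (x : T) : T :=
  if onE G h x then x else
  let y := sg G x in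
  if onE G h y then (let z := sg G y in if onE G h z then sg G z else z) else y.
(* a dart of e survives as a marker iff its vertex consisted only of darts of e *)
Definition del_markh G h : bool :=
  (sg G h == h) || ((sg G h == al G h) && (sg G (al G h) == h)).
Definition del_markk G h : bool := sg G (al G h) == al G h.
Definition pdel G h : pgraph T :=
  let k := al G h in
  let sameblk := fconnect (ph G) h k || frel G h k in
  PGraph [set x in dom G | [|| ~~ onE G h x, (x == h) && del_markh G h
                                | (x == k) && del_markk G h]]
         (del_sg G h)
         (fun x => if onE G h x then x else al G x)
         (vrel G) (wV G)
         (upd_rel sameblk (frel G) h k) (upd_w sameblk (frel G) (wF G) h k).

(* new rotation: boundary of e u v; the face permutation skips e *)
Definition con_sg G h (x : T) : T :=
  if onE G h x then x else
  let y := sg G x in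
  if onE G h y then (let z := ph G y in if onE G h z then ph G z else z) else y.
(* markers for new vertices without darts; a marker carries the boundary
   component of the corresponding (new) isolated vertex *)
Definition con_markh G h : bool :=
  if fconnect (sg G) h (al G h) then sg G (al G h) == h
  else (sg G h == h) && (sg G (al G h) == al G h).
Definition con_markk G h : bool :=
  fconnect (sg G) h (al G h) && (sg G h == al G h).
Definition pcontr G h : pgraph T :=
  let k := al G h in
  let sameblk := fconnect (sg G) h k || vrel G h k in
  PGraph [set x in dom G | [|| ~~ onE G h x, (x == h) && con_markh G h
                                | (x == k) && con_markk G h]]
         (con_sg G h)
         (fun x => if onE G h x then x else al G x)
         (upd_rel sameblk (vrel G) h k) (upd_w sameblk (vrel G) (wV G) h k)
         (frel G) (wF G).

(* isomorphism of packaged ribbon graphs under which every edge corresponds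
   to itself (the identification of edges used in the paper) *)
Definition pg_iso (G1 G2 : pgraph T) : Prop :=
  exists f : T -> T,
  [/\ (forall x, x \in dom G1 -> f x \in dom G2),
      {in dom G1 &, injective f} &
      (forall y, y \in dom G2 -> exists2 x, x \in dom G1 & f x = y)] /\
  [/\ (forall x, x \in dom G1 -> f (sg G1 x) = sg G2 (f x) /\ f (al G1 x) = al G2 (f x)),
      (forall x y, x \in dom G1 -> y \in dom G1 ->
          vrel G2 (f x) (f y) = vrel G1 x y /\ frel G2 (f x) (f y) = frel G1 x y),
      (forall x, x \in dom G1 -> wV G2 (f x) = wV G1 x /\ wF G2 (f x) = wF G1 x) &
      (forall x, x \in dom G1 -> al G1 x != x -> f x = x \/ f x = al G1 x)].
End Ops.

From Pilot Require Import Defs.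
From mathcomp Require Import all_boot.
Set Implicit Arguments. Unset Strict Implicit. Unset Printing Implicit Defensive.

(* The face permutation of G is the rotation of its dual, so removing the two
   darts of e from the faces of G (deletion) is removing them from the
   vertices of G^* (contraction), and vice versa; since the dual swaps the
   vertex and boundary partitions, the block updates coincide as well, and the
   identity on darts is the required isomorphism.  The only point needing an
   argument is whether a dart of e survives as a marker of an isolated vertex:
   deletion and contraction decide this differently, and the two tests agree
   because a dart fixed by a permutation is connected to no other dart. *)

Section Orbits.
Variable T : finType.
Implicit Types (f g : T -> T) (S : {pred T}).

Lemma eq_in_iter f g S : {homo f : x / x \in S} -> {in S, f =1 g} ->
  {in S, forall x n, iter n f x = iter n g x}.
Proof.
move=> fS eq_fg x xS; elim=> //= n <-.
by rewrite eq_fg // (iter_in _ fS).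
Qed.

Lemma eq_in_fconnect f g S : {homo f : x / x \in S} -> {in S, f =1 g} ->
  {in S, forall x y, fconnect f x y = fconnect g x y}.
Proof.
move=> fS eq_fg x xS y.
have eq_iter := eq_in_iter fS eq_fg xS.
apply/idP/idP => /iter_findex <-; first by rewrite eq_iter fconnect_iter.
by rewrite -eq_iter fconnect_iter.
Qed.

Lemma fconnect_fix f x y : f x = x -> fconnect f x y -> y = x.
Proof. by move=> fx /iter_findex <-; rewrite iter_fix. Qed.

End Orbits.

(* Bare [frel] would denote fingraph's function relation. *)
Lemma pg_iso_eq_in (T : finType) (G1 G2 : pgraph T) :
  dom G1 = dom G2 -> {in dom G1, sg G1 =1 sg G2} ->
  [/\ al G1 = al G2, vrel G1 = vrel G2, wV G1 = wV G2,
      Defs.frel G1 = Defs.frel G2 & wF G1 = wF G2] ->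
  pg_iso G1 G2.
Proof.
move=> eq_dom eq_sg [eq_al eq_vrel eq_wV eq_frel eq_wF]; exists id.
rewrite -eq_dom -eq_al -eq_vrel -eq_wV -eq_frel -eq_wF.
split; split=> //; last by left.
- by move=> y yG; exists y.
- by move=> x xG; rewrite eq_sg.
Qed.

Section DualDeletionContraction.
Variables (T : finType) (G : pgraph T) (h : T).
Hypotheses (wfG : wf_pgraph G) (hG : h \in dom G) (h_edge : al G h != h).

Local Notation k := (al G h).

Lemma sg_dom : {homo sg G : x / x \in dom G}.
Proof. by case: wfG => -[]. Qed.

Lemma sg_inj_in : {in dom G &, injective (sg G)}.
Proof. by case: wfG => -[]. Qed.

Lemma al_dom : {homo al G : x / x \in dom G}.
Proof. by case: wfG => -[_ _ alG _] _ x /alG[]. Qed.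

Lemma alK_in : {in dom G, involutive (al G)}.
Proof. by case: wfG => -[_ _ alG _] _ x /alG[]. Qed.

Lemma ph_dom : {homo ph G : x / x \in dom G}.
Proof. by move=> x xG; rewrite sg_dom ?al_dom. Qed.

Lemma ph_inj_in : {in dom G &, injective (ph G)}.
Proof.
move=> x y xG yG /sg_inj_in eq_al.
by rewrite -(alK_in xG) -(alK_in yG) eq_al ?al_dom.
Qed.

Lemma ph_al_in : {in dom G, forall x, ph G (al G x) = sg G x}.
Proof. by move=> x xG; rewrite /ph alK_in. Qed.

Lemma fconnect_ph_dual : {in dom G, forall x y,
  fconnect (ph (dual G)) x y = fconnect (sg G) x y}.
Proof. by apply: eq_in_fconnect ph_al_in => x xG; rewrite /= ph_dom ?al_dom. Qed.

Lemma kG : k \in dom G.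
Proof. exact: al_dom. Qed.

Lemma k_neq_h : (k == h) = false.
Proof. exact: negbTE. Qed.

Lemma h_neq_k : (h == k) = false.
Proof. by rewrite eq_sym k_neq_h. Qed.

Lemma onE_al : {in dom G, forall x, ~~ onE G h x -> ~~ onE G h (al G x)}.
Proof.
move=> x xG; apply: contra; rewrite /onE => /orP[] /eqP al_x.
  by rewrite -(alK_in xG) al_x eqxx orbT.
by rewrite -(alK_in xG) al_x alK_in ?eqxx.
Qed.

Lemma del_markh_dual : del_markh G h = con_markh (dual G) h.
Proof.
rewrite /del_markh /con_markh /= (ph_al_in hG).
case: (boolP (sg G h == h)) => [/eqP sg_h | _] /=.
  rewrite sg_h h_neq_k andbF; case: ifPn => // /negP[].
  rewrite (fconnect_sym_in ph_dom ph_inj_in) ?kG //.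
  by rewrite -[X in fconnect _ _ X]sg_h -(ph_al_in hG) fconnect1.
case: ifPn => [ph_hk | _]; last by rewrite andbC.
apply/negbTE/andP=> -[_ /eqP ph_h].
by move/eqP: (fconnect_fix (f := ph G) ph_h ph_hk); rewrite k_neq_h.
Qed.

Lemma del_markk_dual : del_markk G h = con_markk (dual G) h.
Proof.
rewrite /del_markk /con_markk /=.
case: (boolP (ph G h == k)) => [/eqP ph_h | _]; last by rewrite andbF.
by rewrite andbT -[X in fconnect _ _ X]ph_h fconnect1.
Qed.

Lemma con_markh_dual : con_markh G h = del_markh (dual G) h.
Proof.
rewrite /del_markh /con_markh /= (ph_al_in hG) -/(ph G h).
case: (boolP (ph G h == h)) => [/eqP ph_h | _] /=.
  rewrite ph_h h_neq_k andbF; case: ifPn => // /negP[].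
  rewrite (fconnect_sym_in sg_dom sg_inj_in) ?kG //.
  by rewrite -[X in fconnect _ _ X]ph_h fconnect1.
case: ifPn => [sg_hk | _]; last by rewrite andbC.
apply/esym/negbTE/andP=> -[_ /eqP sg_h].
by move/eqP: (fconnect_fix sg_h sg_hk); rewrite k_neq_h.
Qed.

Lemma con_markk_dual : con_markk G h = del_markk (dual G) h.
Proof.
rewrite /del_markk /con_markk /= (ph_al_in hG).
case: (boolP (sg G h == k)) => [/eqP sg_h | _]; last by rewrite andbF.
by rewrite andbT -[X in fconnect _ _ X]sg_h fconnect1.
Qed.

Lemma ph_del_dual : {in dom G, ph (pdel G h) =1 con_sg (dual G) h}.
Proof.
move=> x xG; rewrite /ph /= /del_sg /con_sg.
change (onE (dual G) h) with (onE G h).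
case: (boolP (onE G h x)) => [-> | xe] //=.
rewrite (negbTE (onE_al xG xe)) -/(ph G x).
have phxG := ph_dom xG.
by case: ifPn => // _; rewrite !ph_al_in // sg_dom.
Qed.

Lemma ph_contr_dual : {in dom G, ph (pcontr G h) =1 del_sg (dual G) h}.
Proof.
move=> x xG; rewrite /ph /= /del_sg /con_sg.
change (onE (dual G) h) with (onE G h).
case: (boolP (onE G h x)) => [-> | xe] //=.
by rewrite (negbTE (onE_al xG xe)).
Qed.

End DualDeletionContraction.

Theorem proposition2p7 (T : finType) (G : pgraph T) (h : T) :
  wf_pgraph G -> h \in dom G -> al G h != h ->
  pg_iso (dual (pdel G h)) (pcontr (dual G) h) /\
  pg_iso (dual (pcontr G h)) (pdel (dual G) h).
Proof.
move=> wfG hG h_edge.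
have sub_dom P x : x \in [set y in dom G | P y] -> x \in dom G.
  by rewrite inE => /andP[].
split; apply: pg_iso_eq_in => /=.
- by rewrite del_markh_dual // del_markk_dual.
- by move=> x /sub_dom; apply: ph_del_dual.
- by [].
- by rewrite con_markh_dual // con_markk_dual.
- by move=> x /sub_dom; apply: ph_contr_dual.
- by rewrite fconnect_ph_dual.
Qed.
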